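(* Let $\mathcal{M}$ be a set of mappings over a database schema $\Sigma$. Then $\mathcal{M}\equiv\mathrm{split}(\mathcal{M})$.
   Context: A mapping is $L(\vec t) \leftsquigarrow U(\vec x)$ with $L$ a concept or role name, $\vec t$ a tuple of terms over the variables $\vec x$ (built with function symbols, or plain variables), and $U$ a view name whose extension $U^{\mathcal{D}}$ on a database instance $\mathcal{D}$ of $\Sigma$ is given by a query (possibly a non-recursive Datalog query with function symbols, whose answers may be tuples of terms $f(\vec a)$). The virtual ABox is $\mathcal{A}_{(\mathcal{M},\mathcal{D})}=\{L(\vec t\,[\vec x\mapsto\vec a])\mid L(\vec t)\leftsquigarrow U(\vec x)\in\mathcal{M},\ \vec a\in U^{\mathcal{D}}\}$, and $\mathcal{M}\equiv\mathcal{M}'$ means $\mathcal{A}_{(\mathcal{M},\mathcal{D})}=\mathcal{A}_{(\mathcal{M}',\mathcal{D})}$ for every instance $\mathcal{D}$ of $\Sigma$. Split: if $m=L(\vec x)\leftsquigarrow U(\vec x)$ where $U$ is a view name for a non-recursive Datalog query $(U(\vec x),\{U(\vec f_i(\vec x_i))\leftarrow V_i(\vec x_i)\mid 1\le i\le n\})$ (each $V_i(\vec x_i)$ possibly a conjunction of view atoms), then $\mathrm{split}(m)=\{L(\vec f_i(\vec x_i))\leftsquigarrow V_i(\vec x_i)\mid 1\le i\le n\}$; for any mapping $m'$ not of this form, $\mathrm{split}(m')=\{m'\}$. For a set, $\mathrm{split}(\mathcal{M})=\bigcup_{m\in\mathcal{M}}\mathrm{split}(m)$. *)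

From Stdlib Require List.
From mathcomp Require Import all_boot.
Set Implicit Arguments.
Unset Strict Implicit.
Unset Printing Implicit Defensive.

(* Ground terms (values that may occur in view answers / ABox assertions):
   constants from C, and function symbols from F applied to tuples. *)
Inductive term (C F : Type) : Type :=
  | Const (c : C)
  | App (f : F) (ts : seq (term C F)).

Inductive oterm (F : Type) : Type :=
  | Var (x : nat)
  | OApp (f : F) (ts : seq (oterm F)).

Arguments Var {F} x.

Fixpoint osubst (C F : Type) (s : nat -> term C F) (t : oterm F) : term C F :=
  match t with
  | Var x => s x
  | OApp f ts => App f (map (osubst s) ts)
  end.

Definition atom (V : Type) : Type := (V * seq nat)%type.

(* A conjunction of view atoms holds under the assignment s in instance D,
   where ext D W is the extension W^D of the view name W. *)
Definition holds (C F V Inst : Type) (ext : Inst -> V -> seq (term C F) -> Prop)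
  (D : Inst) (s : nat -> term C F) (body : seq (atom V)) : Prop :=
  forall a, List.In a body -> ext D a.1 (map s a.2).

(* A Datalog rule  U(heads) <- body  (the head predicate U is implicit:
   it is the view whose definition the rule belongs to). *)
Record rule (F V : Type) : Type := Rule {
  rhead : seq (oterm F);
  rbody : seq (atom V) }.

(* A mapping  L(targ) ~> src, with src a conjunction of view atoms
   (a single atom U(x) in the basic case). *)
Record mapping (F V A : Type) : Type := Mapping {
  mlab  : A;                 (* concept or role name L *)
  mtarg : seq (oterm F);
  msrc  : seq (atom V) }.

(* Semantics of the views defined by non-recursive Datalog queries:
   def U = Some rules means U is the view name of the query
   (U(x), {U(f_i(x_i)) <- V_i(x_i)}); its extension on every instance D is
   then the union over the rules of the instantiated rule heads. *)
Definition datalog_sem (C F V Inst : Type)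
  (ext : Inst -> V -> seq (term C F) -> Prop)
  (def : V -> option (seq (rule F V))) : Prop :=
  forall D U rules, def U = Some rules ->
  forall a, ext D U a <->
    exists2 r, List.In r rules &
      exists s, holds ext D s (rbody r) /\ a = map (osubst s) (rhead r).

Definition vabox (C F V A Inst : Type) (ext : Inst -> V -> seq (term C F) -> Prop)
  (M : mapping F V A -> Prop) (D : Inst) : (A * seq (term C F)) -> Prop :=
  fun asr => exists2 m, M m &
    exists s, holds ext D s (msrc m) /\ asr = (mlab m, map (osubst s) (mtarg m)).

Definition mequiv (C F V A Inst : Type) (ext : Inst -> V -> seq (term C F) -> Prop)
  (M M' : mapping F V A -> Prop) : Prop :=
  forall D asr, vabox ext M D asr <-> vabox ext M' D asr.

(* m is of the form L(x) ~> U(x) with x a tuple of distinct variables and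
   U a view name defined by a non-recursive Datalog query with rules [rules]
   (U(x), {U(f_i(x_i)) <- V_i(x_i)}); the rule heads f_i(x_i) are tuples of
   the same arity as x (well-formedness of the query). *)
Definition split_form (F V A : Type) (def : V -> option (seq (rule F V)))
  (m : mapping F V A) (rules : seq (rule F V)) : Prop :=
  exists U xs, [/\ uniq xs, mtarg m = map Var xs, msrc m = [:: (U, xs)],
                   def U = Some rules
                 & forall r, List.In r rules -> size (rhead r) = size xs].

Definition split1 (F V A : Type) (def : V -> option (seq (rule F V)))
  (m : mapping F V A) : mapping F V A -> Prop :=
  fun m' =>
    (exists rules, split_form def m rules /\
       exists2 r, List.In r rules & m' = Mapping (mlab m) (rhead r) (rbody r))
    \/ ((~ exists rules, split_form def m rules) /\ m' = m).

Definition msplit (F V A : Type) (def : V -> option (seq (rule F V)))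
  (M : mapping F V A -> Prop) : mapping F V A -> Prop :=
  fun m' => exists2 m, M m & split1 def m m'.

(** Split replaces a mapping [L(x) ~> U(x)] by one mapping [L(f_i(x_i)) ~> V_i(x_i)]
    per rule of the Datalog definition of [U].  Since [U^D] is the union of the
    instantiated rule heads, an assignment of [x] satisfying [U(x)] is the same as
    an assignment satisfying some body [V_i], read through the head [f_i(x_i)];
    conversely, because [x] consists of distinct variables, every instantiated head
    can be taken as the value of [x]. *)

From Stdlib Require Import Classical_Prop.
From mathcomp Require Import all_boot.

Set Implicit Arguments.
Unset Strict Implicit.

Lemma map_nth_index (T : Type) (d : T) (xs : seq nat) (l : seq T) :
  uniq xs -> size l = size xs -> map (fun x => nth d l (index x xs)) xs = l.
Proof.
move=> uniq_xs size_l; apply: (@eq_from_nth _ d); first by rewrite size_map.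
by move=> i; rewrite size_map => lt_i; rewrite (nth_map 0%N) // index_uniq.
Qed.

Section Split.

Variables (C F V A Inst : Type).
Variable ext : Inst -> V -> seq (term C F) -> Prop.
Variable def : V -> option (seq (rule F V)).
Hypothesis Hsem : datalog_sem ext def.

Definition produces (D : Inst) (m : mapping F V A) (asr : A * seq (term C F)) :=
  exists s, holds ext D s (msrc m) /\ asr = (mlab m, map (osubst s) (mtarg m)).

Lemma holds1 D s U xs : holds ext D s [:: (U, xs)] <-> ext D U (map s xs).
Proof. by split=> [h | hU a [<-|[]]] //; apply: (h (U, xs)); left. Qed.

Lemma produces_split_form D asr m rules : split_form def m rules ->
  produces D m asr <->
  exists2 r, List.In r rules &
    produces D (Mapping (mlab m) (rhead r) (rbody r)) asr.
Proof.
case=> U [xs [uniq_xs targ_m src_m def_U size_heads]].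
rewrite /produces targ_m src_m; split.
- case=> s [/holds1 /(Hsem D def_U) [r r_in [s' [body_r head_r]]] ->].
  by exists r => //; exists s'; rewrite -map_comp /= head_r.
- case=> r r_in [s' [body_r ->]] /=.
  set l := map (osubst s') (rhead r).
  have map_l : map (fun x => nth (s' 0%N) l (index x xs)) xs = l.
    by apply: map_nth_index; rewrite // size_map size_heads.
  exists (fun x => nth (s' 0%N) l (index x xs)); split.
    by apply/holds1; rewrite map_l; apply/(Hsem D def_U); exists r => //; exists s'.
  by rewrite -map_comp /= map_l.
Qed.

Lemma produces_split1 D m asr :
  produces D m asr <-> exists2 m', split1 def m m' & produces D m' asr.
Proof.
have [[rules form_m] | no_form] := classic (exists rules, split_form def m rules).
- split.
  + case/(produces_split_form D asr form_m)=> r r_in prod_r.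
    exists (Mapping (mlab m) (rhead r) (rbody r)) => //.
    by left; exists rules; split=> //; exists r.
  + case=> m' [[rules' [form_m' [r r_in ->]]] prod_r | [no_form' _]].
      by apply/(produces_split_form D asr form_m'); exists r.
    by case: no_form'; exists rules.
- split=> [prod_m | [m' [[rules [form_m _]] | [_ ->]] //]].
    by exists m => //; right.
  by case: no_form; exists rules.
Qed.

End Split.

Theorem corollary1 (C F V A Inst : Type)
  (ext : Inst -> V -> seq (term C F) -> Prop)
  (def : V -> option (seq (rule F V)))
  (Hsem : datalog_sem ext def)
  (M : mapping F V A -> Prop) :
  mequiv ext M (msplit def M).
Proof.
move=> D asr; split.
- by case=> m Mm /(produces_split1 Hsem) [m' split_m' prod_m']; exists m' => //; exists m.
- case=> m' [m Mm split_m'] prod_m'.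
  by exists m => //; apply/(produces_split1 Hsem); exists m'.
Qed.
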